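(* For the modified EnvZ/OmpR network described in the context and any positive rate constants $k_1,\dots,k_{16}$, at every positive steady state \[[\mathrm{OmpR\text{-}P}]<\frac{k_1}{k_2}\cdot\frac{k_3k_5}{k_4+k_5}\cdot\frac{k_{14}+k_{15}}{k_{13}k_{15}}\quad\text{and}\quad[\mathrm{OmpR\text{-}P}]<k_5\,\frac{k_{11}+k_{12}}{k_{10}k_{12}}.\]
   Context: The modified EnvZ/OmpR network has mass-action kinetics and reactions $\mathrm{EnvZ\text{-}ADP}\underset{k_2}{\overset{k_1}{\rightleftharpoons}}\mathrm{EnvZ}\underset{k_4}{\overset{k_3}{\rightleftharpoons}}\mathrm{EnvZ\text{-}ATP}\xrightarrow{k_5}\mathrm{EnvZ\text{-}P}$; $\mathrm{EnvZ\text{-}P}+\mathrm{OmpR}\underset{k_7}{\overset{k_6}{\rightleftharpoons}}\mathrm{EnvZ\text{-}P\text{-}OmpR}\underset{k_9}{\overset{k_8}{\rightleftharpoons}}\mathrm{EnvZ}+\mathrm{OmpR\text{-}P}$; $\mathrm{EnvZ\text{-}ATP}+\mathrm{OmpR\text{-}P}\underset{k_{11}}{\overset{k_{10}}{\rightleftharpoons}}\mathrm{EnvZ\text{-}ATP\text{-}OmpR\text{-}P}\xrightarrow{k_{12}}\mathrm{EnvZ\text{-}ATP}+\mathrm{OmpR}$; $\mathrm{EnvZ\text{-}ADP}+\mathrm{OmpR\text{-}P}\underset{k_{14}}{\overset{k_{13}}{\rightleftharpoons}}\mathrm{EnvZ\text{-}ADP\text{-}OmpR\text{-}P}\xrightarrow{k_{15}}\mathrm{EnvZ\text{-}ADP}+\mathrm{OmpR}$;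 $\mathrm{OmpR\text{-}P}\xrightarrow{k_{16}}\mathrm{OmpR}$ (here $A\underset{k'}{\overset{k}{\rightleftharpoons}}B$ means $A\xrightarrow{k}B$ and $B\xrightarrow{k'}A$; hyphenated names are single species). Square brackets denote concentrations; a positive steady state is a vector of positive concentrations of all nine species at which all mass-action rates of change vanish. *)

From Stdlib Require Import Reals.
Open Scope R_scope.

Record state := mkState {
  XD : R;    (* [EnvZ-ADP] *)
  X : R;     (* [EnvZ] *)
  XT : R;    (* [EnvZ-ATP] *)
  XP : R;    (* [EnvZ-P] *)
  Y : R;     (* [OmpR] *)
  XPY : R;   (* [EnvZ-P-OmpR] *)
  YP : R;    (* [OmpR-P] *)
  XTYP : R;  (* [EnvZ-ATP-OmpR-P] *)
  XDYP : R   (* [EnvZ-ADP-OmpR-P] *)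
}.

(* Rate constants k 1, ..., k 16 (indices outside 1..16 are irrelevant). *)
Definition rates := nat -> R.

Definition positive_rates (k : rates) : Prop :=
  forall i, (1 <= i <= 16)%nat -> 0 < k i.

Definition positive_state (s : state) : Prop :=
  0 < XD s /\ 0 < X s /\ 0 < XT s /\ 0 < XP s /\ 0 < Y s /\
  0 < XPY s /\ 0 < YP s /\ 0 < XTYP s /\ 0 < XDYP s.

Definition dXD (k : rates) (s : state) : R :=
  - k 1%nat * XD s + k 2%nat * X s - k 13%nat * XD s * YP s
  + k 14%nat * XDYP s + k 15%nat * XDYP s.
Definition dX (k : rates) (s : state) : R :=
  k 1%nat * XD s - k 2%nat * X s - k 3%nat * X s + k 4%nat * XT s
  + k 8%nat * XPY s - k 9%nat * X s * YP s.
Definition dXT (k : rates) (s : state) : R :=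
  k 3%nat * X s - k 4%nat * XT s - k 5%nat * XT s
  - k 10%nat * XT s * YP s + k 11%nat * XTYP s + k 12%nat * XTYP s.
Definition dXP (k : rates) (s : state) : R :=
  k 5%nat * XT s - k 6%nat * XP s * Y s + k 7%nat * XPY s.
Definition dY (k : rates) (s : state) : R :=
  - k 6%nat * XP s * Y s + k 7%nat * XPY s + k 12%nat * XTYP s
  + k 15%nat * XDYP s + k 16%nat * YP s.
Definition dXPY (k : rates) (s : state) : R :=
  k 6%nat * XP s * Y s - k 7%nat * XPY s - k 8%nat * XPY s
  + k 9%nat * X s * YP s.
Definition dYP (k : rates) (s : state) : R :=
  k 8%nat * XPY s - k 9%nat * X s * YP s - k 10%nat * XT s * YP s
  + k 11%nat * XTYP s - k 13%nat * XD s * YP s + k 14%nat * XDYP s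
  - k 16%nat * YP s.
Definition dXTYP (k : rates) (s : state) : R :=
  k 10%nat * XT s * YP s - k 11%nat * XTYP s - k 12%nat * XTYP s.
Definition dXDYP (k : rates) (s : state) : R :=
  k 13%nat * XD s * YP s - k 14%nat * XDYP s - k 15%nat * XDYP s.

Definition steady_state (k : rates) (s : state) : Prop :=
  dXD k s = 0 /\ dX k s = 0 /\ dXT k s = 0 /\ dXP k s = 0 /\ dY k s = 0 /\
  dXPY k s = 0 /\ dYP k s = 0 /\ dXTYP k s = 0 /\ dXDYP k s = 0.

Definition positive_steady_state (k : rates) (s : state) : Prop :=
  positive_state s /\ steady_state k s.

From Stdlib Require Import Reals Lra Lia Psatz.
Open Scope R_scope.

(* Summing the rate equations of EnvZ-P, EnvZ-P-OmpR, OmpR-P and the two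
   phosphatase complexes shows that at steady state the phosphorylation flux
   k5 [EnvZ-ATP] equals the total dephosphorylation flux
   k12 [EnvZ-ATP-OmpR-P] + k15 [EnvZ-ADP-OmpR-P] + k16 [OmpR-P]; at a positive
   steady state each catalytic flux is therefore strictly below k5 [EnvZ-ATP].
   Each phosphatase complex is in quasi-equilibrium with its enzyme and with
   OmpR-P, so an elementary enzyme-kinetic lemma turns "catalytic flux
   < rho * [enzyme]" into "[OmpR-P] < rho * (k_off + k_cat)/(k_on k_cat)".
   For EnvZ-ATP the ratio rho is k5 itself; for EnvZ-ADP it is obtained by
   expressing k5 [EnvZ-ATP] through [EnvZ-ADP] via the nucleotide-exchange
   equilibria EnvZ-ADP <-> EnvZ <-> EnvZ-ATP. *)

Lemma enzyme_substrate_bound (kon koff kcat E S C rho : R) :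
  0 < kon -> 0 < kcat -> 0 < koff + kcat -> 0 < E ->
  kon * E * S = (koff + kcat) * C -> kcat * C < rho * E ->
  S < rho * ((koff + kcat) / (kon * kcat)).
Proof.
  intros Hon Hcat Hsum HE Hbind Hflux.
  assert (Hscaled : kon * kcat * E * S < rho * (koff + kcat) * E).
  { replace (kon * kcat * E * S) with (kcat * (kon * E * S)) by ring.
    rewrite Hbind.
    replace (kcat * ((koff + kcat) * C)) with ((koff + kcat) * (kcat * C)) by ring.
    replace (rho * (koff + kcat) * E) with ((koff + kcat) * (rho * E)) by ring.
    apply Rmult_lt_compat_l; assumption. }
  assert (Hprod : kon * kcat * S < rho * (koff + kcat)).
  { apply (Rmult_lt_reg_r E); [exact HE | lra]. }
  apply (Rmult_lt_reg_r (kon * kcat)); [apply Rmult_lt_0_compat; assumption |].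
  replace (rho * ((koff + kcat) / (kon * kcat)) * (kon * kcat))
    with (rho * (koff + kcat)) by (field; lra).
  lra.
Qed.

Section SteadyState.

Variables (k : rates) (s : state).
Hypothesis Hsteady : steady_state k s.

Lemma phosphorylation_balance :
  k 5%nat * XT s =
  k 12%nat * XTYP s + k 15%nat * XDYP s + k 16%nat * YP s.
Proof.
  destruct Hsteady as (_ & _ & _ & eXP & _ & eXPY & eYP & eXTYP & eXDYP).
  unfold dXP, dXPY, dYP, dXTYP, dXDYP in *. lra.
Qed.

Lemma atp_complex_balance :
  k 10%nat * XT s * YP s = (k 11%nat + k 12%nat) * XTYP s.
Proof.
  destruct Hsteady as (_ & _ & _ & _ & _ & _ & _ & eXTYP & _).
  unfold dXTYP in eXTYP. lra.
Qed.

Lemma adp_complex_balance :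
  k 13%nat * XD s * YP s = (k 14%nat + k 15%nat) * XDYP s.
Proof.
  destruct Hsteady as (_ & _ & _ & _ & _ & _ & _ & _ & eXDYP).
  unfold dXDYP in eXDYP. lra.
Qed.

(* The nucleotide-exchange equilibria EnvZ-ADP <-> EnvZ <-> EnvZ-ATP express
   the phosphorylation flux as a multiple of [EnvZ-ADP]. *)
Lemma phosphorylation_flux_via_adp :
  0 < k 2%nat -> 0 < k 4%nat + k 5%nat ->
  k 5%nat * XT s =
  (k 1%nat / k 2%nat) * (k 3%nat * k 5%nat / (k 4%nat + k 5%nat)) * XD s.
Proof.
  intros k2 k45.
  destruct Hsteady as (eXD & _ & eXT & _ & _ & _ & _ & eXTYP & eXDYP).
  unfold dXD, dXT, dXTYP, dXDYP in *.
  assert (Hadp : k 2%nat * X s = k 1%nat * XD s) by lra.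
  assert (Hatp : (k 4%nat + k 5%nat) * XT s = k 3%nat * X s) by lra.
  apply (Rmult_eq_reg_r (k 2%nat * (k 4%nat + k 5%nat))); [| nra].
  replace (k 1%nat / k 2%nat * (k 3%nat * k 5%nat / (k 4%nat + k 5%nat)) * XD s
           * (k 2%nat * (k 4%nat + k 5%nat)))
    with (k 5%nat * k 3%nat * (k 1%nat * XD s)) by (field; lra).
  rewrite <- Hadp.
  replace (k 5%nat * k 3%nat * (k 2%nat * X s))
    with (k 5%nat * k 2%nat * (k 3%nat * X s)) by ring.
  rewrite <- Hatp. ring.
Qed.

End SteadyState.

Theorem mainTheorem9 (k : rates) (s : state) :
  positive_rates k -> positive_steady_state k s ->
  YP s < (k 1%nat / k 2%nat) * (k 3%nat * k 5%nat / (k 4%nat + k 5%nat))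
           * ((k 14%nat + k 15%nat) / (k 13%nat * k 15%nat))
  /\ YP s < k 5%nat * ((k 11%nat + k 12%nat) / (k 10%nat * k 12%nat)).
Proof.
  intros Hk [(hXD & _ & hXT & _ & _ & _ & hYP & hXTYP & hXDYP) Hsteady].
  pose proof (Hk 2%nat ltac:(lia)) as k2.  pose proof (Hk 4%nat ltac:(lia)) as k4.
  pose proof (Hk 5%nat ltac:(lia)) as k5.  pose proof (Hk 10%nat ltac:(lia)) as k10.
  pose proof (Hk 11%nat ltac:(lia)) as k11. pose proof (Hk 12%nat ltac:(lia)) as k12.
  pose proof (Hk 13%nat ltac:(lia)) as k13. pose proof (Hk 14%nat ltac:(lia)) as k14.
  pose proof (Hk 15%nat ltac:(lia)) as k15. pose proof (Hk 16%nat ltac:(lia)) as k16.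
  pose proof (phosphorylation_balance k s Hsteady) as Hbal.
  (* Every dephosphorylation flux is positive, so each catalytic one is
     strictly smaller than the phosphorylation flux. *)
  assert (Hadp_flux : k 15%nat * XDYP s < k 5%nat * XT s) by nra.
  assert (Hatp_flux : k 12%nat * XTYP s < k 5%nat * XT s) by nra.
  split.
  - apply (enzyme_substrate_bound _ _ _ (XD s) _ (XDYP s)); try lra.
    + exact (adp_complex_balance k s Hsteady).
    + rewrite <- (phosphorylation_flux_via_adp k s Hsteady); lra.
  - apply (enzyme_substrate_bound _ _ _ (XT s) _ (XTYP s)); try lra.
    exact (atp_complex_balance k s Hsteady).
Qed.
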